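(* Let $\mathcal{H}_A\cong\mathbb{C}^{d_A}$ and $\mathcal{H}_B\cong\mathbb{C}^{d_B}$ with computational bases $\{|a\rangle\}_{a=0}^{d_A-1}$, $\{|b\rangle\}_{b=0}^{d_B-1}$. For a dimension $d$ define the operator on $(\mathbb{C}^d)^{\otimes 3}$ $$O_+^{(d)}=\sum_{\vec a=(a_1,a_2,a_3)\in\mathbb{Z}_d^3}\Big[(d+1)(d+2)\,\delta_{a_1a_2a_3}-(d+1)\big(\delta_{a_1a_2}+\delta_{a_2a_3}+\delta_{a_1a_3}\big)+2\Big]\,|\vec a\rangle\langle\vec a|,$$ where $\delta_{a_1a_2a_3}=1$ iff $a_1=a_2=a_3$. Let $O_A=O_+^{(d_A)}$ on $\mathcal{H}_A^{\otimes 3}$ and $O_B=O_+^{(d_B)}$ on $\mathcal{H}_B^{\otimes 3}$. Then $\Phi^3_A(O_A)=M_+^A$ and $\Phi^3_B(O_B)=M_+^B$, and consequently $(\Phi^3_A\otimes\Phi^3_B)(O_A\otimes O_B)=M_+^A\otimes M_+^B$.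
   Context: For a Hilbert space $\mathcal{H}\cong\mathbb{C}^d$ and integer $t\ge1$, the $t$-fold twirling channel is $\Phi^t(X)=\int_{\mathrm{Haar}}dU\,U^{\otimes t}XU^{\dagger\otimes t}$ for linear operators $X$ on $\mathcal{H}^{\otimes t}$ (Haar measure on $U(d)$; equivalently an average over a unitary $t$-design). $\Phi^3_A,\Phi^3_B$ denote this channel on $\mathcal{H}_A^{\otimes3}$, $\mathcal{H}_B^{\otimes3}$, and $\Phi^3_A\otimes\Phi^3_B$ denotes independent twirling on the two parties, acting on $(\mathcal{H}_A\otimes\mathcal{H}_B)^{\otimes 3}\cong\mathcal{H}_A^{\otimes3}\otimes\mathcal{H}_B^{\otimes3}$. For $\pi\in S_3$, $W_\pi$ is the permutation operator on $\mathcal{H}^{\otimes 3}$, $W_\pi=\sum_{s_i}|s_{\pi(1)},s_{\pi(2)},s_{\pi(3)}\rangle\langle s_1,s_2,s_3|$; in particular $W_{(1,2,3)}|a_1,a_2,a_3\rangle=|a_2,a_3,a_1\rangle$. $M_+=W_{(1,2,3)}+W_{(1,3,2)}$, with superscripts indicating the system. *)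

From HB Require Import structures.
From mathcomp Require Import all_boot all_order all_algebra.
From mathcomp Require Import all_classical all_reals all_analysis.
From mathcomp Require Import complex.
Set Implicit Arguments. Unset Strict Implicit. Unset Printing Implicit Defensive.
Import Order.TTheory GRing.Theory Num.Theory.
Import numFieldNormedType.Exports.
Local Open Scope classical_set_scope.
Local Open Scope ring_scope.

(* the usual (modulus-norm) topology on C = R[i], as a normed space over itself;
   it induces the standard topology on d x d complex matrices *)
HB.instance Definition _ (R : rcfType) := NormedModule.copy R[i] R[i]^o.

(* Linear operators on a finite-dimensional Hilbert space with orthonormal
   (computational) basis indexed by a finite type T: matrices T x T -> C. *)
Definition op (R : realType) (T : finType) := T -> T -> R[i].

(* index set of the computational basis of (C^d)^{⊗3}: triples (a1,a2,a3),
   encoded as ((a1,a2),a3) *)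
Definition trip (d : nat) := ('I_d * 'I_d * 'I_d)%type.

Definition unitary (R : realType) (d : nat) (V : 'M[R[i]]_d) : Prop :=
  V *m (map_mx (@conjc R) V)^T = 1%:M.

Definition cexpect (R : realType) (dO : measure_display) (O : measurableType dO)
  (P : probability O R) (f : O -> R[i]) : R[i] :=
  Complex (Rintegral P setT (fun w => complex.Re (f w)))
          (Rintegral P setT (fun w => complex.Im (f w))).

(* U is a Haar-distributed random unitary on the probability space (O, P):
   U takes values in U(d), its entries are random variables, and its law
   (a Borel probability measure on d x d complex matrices) is invariant under
   left multiplication by any fixed unitary V. *)
Definition haar_unitary (R : realType) (dO : measure_display) (O : measurableType dO)
  (P : probability O R) (d : nat) (U : O -> 'M[R[i]]_d) : Prop :=
  [/\ (forall w, unitary (U w)),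
      (forall i j, measurable_fun setT (fun w => complex.Re (U w i j))
                /\ measurable_fun setT (fun w => complex.Im (U w i j)))
    & (forall V : 'M[R[i]]_d, unitary V ->
         forall A : set 'M[R[i]]_d, <<s [set B : set 'M[R[i]]_d | open B] >> A ->
           P (U @^-1` A) = P ((fun w => V *m U w) @^-1` A))].

(* entries of U^{⊗3} in the computational basis *)
Definition tens3 (R : realType) (d : nat) (U : 'M[R[i]]_d) (x y : trip d) : R[i] :=
  U x.1.1 y.1.1 * U x.1.2 y.1.2 * U x.2 y.2.

(* the 3-fold twirl Phi^3(X) = E_U [ U^{⊗3} X U^{†⊗3} ], U Haar distributed *)
Definition twirl3 (R : realType) (dO : measure_display) (O : measurableType dO)
  (P : probability O R) (d : nat) (U : O -> 'M[R[i]]_d)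
  (X : op R (trip d)) : op R (trip d) :=
  fun x z => cexpect P (fun w =>
    \sum_(y : trip d) \sum_(v : trip d)
       tens3 (U w) x y * X y v * conjc (tens3 (U w) z v)).

Definition tensop (R : realType) (T1 T2 : finType) (X : op R T1) (Y : op R T2)
  : op R (T1 * T2)%type :=
  fun x y => X x.1 y.1 * Y x.2 y.2.

Definition matunit (R : realType) (T : finType) (a a' : T) : op R T :=
  fun u v => ((u == a) && (v == a'))%:R.

(* tensor product of linear superoperators Phi1 ⊗ Phi2, defined by its action on
   the matrix-unit basis: (Phi1 ⊗ Phi2)(Z) = sum Z_{(a,b),(a',b')} Phi1(|a><a'|) ⊗ Phi2(|b><b'|) *)
Definition tens_super (R : realType) (T1 T2 : finType)
  (Phi1 : op R T1 -> op R T1) (Phi2 : op R T2 -> op R T2)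
  (Z : op R (T1 * T2)%type) : op R (T1 * T2)%type :=
  fun x y => \sum_(a : T1) \sum_(a' : T1) \sum_(b : T2) \sum_(b' : T2)
     Z (a, b) (a', b') * (Phi1 (matunit R a a') x.1 y.1 * Phi2 (matunit R b b') x.2 y.2).

Definition Oplus (R : realType) (d : nat) : op R (trip d) :=
  fun x y => if x == y then
    let: (a1, a2, a3) := x in
      ((d + 1) * (d + 2))%N%:R * ((a1 == a2) && (a2 == a3))%:R
      - (d + 1)%N%:R * ((a1 == a2)%:R + (a2 == a3)%:R + (a1 == a3)%:R) + 2
  else 0.

(* W_pi |s1 s2 s3> = |s_pi(1) s_pi(2) s_pi(3)>;
   W_(123)|a1 a2 a3> = |a2 a3 a1>,  W_(132)|a1 a2 a3> = |a3 a1 a2>. *)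
Definition W123 (R : realType) (d : nat) : op R (trip d) :=
  fun x y => let: (y1, y2, y3) := y in (x == (y2, y3, y1))%:R.
Definition W132 (R : realType) (d : nat) : op R (trip d) :=
  fun x y => let: (y1, y2, y3) := y in (x == (y3, y1, y2))%:R.
Definition Mplus (R : realType) (d : nat) : op R (trip d) :=
  fun x y => @W123 R d x y + @W132 R d x y.

(* The twirl of a diagonal operator only involves the column moments
   E[sum_a prod_(k in s) U_(k,a) prod_(k in t) conj U_(k,a)] of the Haar unitary U, of
   degree at most three.  Left invariance of the Haar law is used twice: invariance under a
   diagonal phase matrix diag(1, .., i, .., 1) kills every moment whose row multisets s and t
   differ, and invariance under Givens rotations in a (p, q)-plane relates the surviving
   moments, forcing the ratios E[ppp] : E[ppq] : E[pqr] = 6 : 2 : 1.  Unitarity of the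
   columns lowers the degree (summing out a repeated row index), which fixes the
   normalisation and gives the Weingarten formulas E[x|z] = #{sigma | x = z o sigma} /
   ((d+1)(d+2)) in degree three and 1/(d+1) times the same count in degree two.  Inserted in
   the expansion of Phi^3(O_+), every term except the two 3-cycles cancels.  The statement for
   Phi_A (x) Phi_B then follows from linearity on matrix units. *)

From HB Require Import structures.
From mathcomp Require Import all_boot all_order all_algebra.
From mathcomp Require Import all_classical all_reals all_analysis.
From mathcomp Require Import complex.
From mathcomp Require Import ring zify measurable_realfun.
Set Implicit Arguments. Unset Strict Implicit. Unset Printing Implicit Defensive.
Import Order.TTheory GRing.Theory Num.Theory.
Import numFieldNormedType.Exports.
Local Open Scope classical_set_scope.
Local Open Scope ring_scope.

Lemma sum_delta (R : pzSemiRingType) (I : finType) (a : I) (F : I -> R) :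
  \sum_i (a == i)%:R * F i = F a.
Proof.
rewrite (bigD1 a) //= eqxx mul1r big1 ?addr0 // => i ia.
by rewrite eq_sym (negbTE ia) mul0r.
Qed.

Section ComplexParts.
Variable R : rcfType.
Implicit Types a b z : R[i].

Lemma ReD a b : complex.Re (a + b) = complex.Re a + complex.Re b.
Proof. exact: (raddfD (@complex.Re R : Rcomplex R -> R)). Qed.

Lemma ImD a b : complex.Im (a + b) = complex.Im a + complex.Im b.
Proof. exact: (raddfD (@complex.Im R : Rcomplex R -> R)). Qed.

Lemma ReM a b : complex.Re (a * b) = complex.Re a * complex.Re b - complex.Im a * complex.Im b.
Proof. by case: a; case: b. Qed.

Lemma ImM a b : complex.Im (a * b) = complex.Re a * complex.Im b + complex.Im a * complex.Re b.
Proof. by case: a => ? ?; case: b => ? ? /=; ring. Qed.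

Lemma ReJ z : complex.Re z^* = complex.Re z. Proof. by case: z. Qed.

Lemma ImJ z : complex.Im z^* = - complex.Im z. Proof. by case: z. Qed.

Lemma normc_ge_Im z : `|complex.Im z|%:C%C <= `|z|.
Proof.
have normi : `|'i| = 1 :> R[i] by rewrite normc_def /= expr0n expr1n add0r sqrtr1.
by rewrite -normrN -ReiNIm -[`|z|]mulr1 -normi -normrM normc_ge_Re.
Qed.

End ComplexParts.

(** * Bounded measurable complex functions and their expectation *)

Section BoundedMeasurable.
Variables (R : realType) (d : measure_display) (T : measurableType d).
Implicit Types f g : T -> R[i].

Definition cmeasurable f := measurable_fun setT (fun w => complex.Re (f w))
  /\ measurable_fun setT (fun w => complex.Im (f w)).

Definition bmeasurable f := cmeasurable f /\ exists M, forall w, `|f w| <= M.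

Lemma cmeasurable_cst c : cmeasurable (fun=> c).
Proof. by split; apply: measurable_cst. Qed.

Lemma cmeasurableD f g : cmeasurable f -> cmeasurable g -> cmeasurable (fun w => f w + g w).
Proof.
move=> [f1 f2] [g1 g2]; split.
  by under eq_fun do rewrite ReD; apply: measurable_funD.
by under eq_fun do rewrite ImD; apply: measurable_funD.
Qed.

Lemma cmeasurableM f g : cmeasurable f -> cmeasurable g -> cmeasurable (fun w => f w * g w).
Proof.
move=> [f1 f2] [g1 g2]; split.
  by under eq_fun do rewrite ReM; apply: measurable_funB; apply: measurable_funM.
by under eq_fun do rewrite ImM; apply: measurable_funD; apply: measurable_funM.
Qed.

Lemma cmeasurableJ f : cmeasurable f -> cmeasurable (fun w => (f w)^*).
Proof.
move=> [f1 f2]; split; first by under eq_fun do rewrite ReJ.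
by under eq_fun do rewrite ImJ; apply: measurable_funN.
Qed.

Lemma cmeasurable_sum (I : Type) (r : seq I) (F : I -> T -> R[i]) :
  (forall i, cmeasurable (F i)) -> cmeasurable (fun w => \sum_(i <- r) F i w).
Proof.
move=> mF; elim: r => [|i r IHr].
  by under eq_fun do rewrite big_nil; apply: cmeasurable_cst.
by under eq_fun do rewrite big_cons; apply: cmeasurableD.
Qed.

Lemma cmeasurable_prod (I : Type) (r : seq I) (F : I -> T -> R[i]) :
  (forall i, cmeasurable (F i)) -> cmeasurable (fun w => \prod_(i <- r) F i w).
Proof.
move=> mF; elim: r => [|i r IHr].
  by under eq_fun do rewrite big_nil; apply: cmeasurable_cst.
by under eq_fun do rewrite big_cons; apply: cmeasurableM.
Qed.

Lemma bmeasurable_cst c : bmeasurable (fun=> c).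
Proof. by split; [apply: cmeasurable_cst | exists `|c|]. Qed.

Lemma bmeasurableD f g : bmeasurable f -> bmeasurable g -> bmeasurable (fun w => f w + g w).
Proof.
move=> [mf [M fM]] [mg [N gN]]; split; first exact: cmeasurableD.
by exists (M + N) => w; apply: le_trans (ler_normD _ _) (lerD _ _).
Qed.

Lemma bmeasurableM f g : bmeasurable f -> bmeasurable g -> bmeasurable (fun w => f w * g w).
Proof.
move=> [mf [M fM]] [mg [N gN]]; split; first exact: cmeasurableM.
by exists (M * N) => w; rewrite normrM ler_pM.
Qed.

Lemma bmeasurableJ f : bmeasurable f -> bmeasurable (fun w => (f w)^*).
Proof.
move=> [mf [M fM]]; split; first exact: cmeasurableJ.
by exists M => w; rewrite norm_conjC.
Qed.

Lemma bmeasurable_sum (I : Type) (r : seq I) (F : I -> T -> R[i]) :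
  (forall i, bmeasurable (F i)) -> bmeasurable (fun w => \sum_(i <- r) F i w).
Proof.
move=> mF; elim: r => [|i r IHr].
  by under eq_fun do rewrite big_nil; apply: bmeasurable_cst.
by under eq_fun do rewrite big_cons; apply: bmeasurableD.
Qed.

Lemma bmeasurable_prod (I : Type) (r : seq I) (F : I -> T -> R[i]) :
  (forall i, bmeasurable (F i)) -> bmeasurable (fun w => \prod_(i <- r) F i w).
Proof.
move=> mF; elim: r => [|i r IHr].
  by under eq_fun do rewrite big_nil; apply: bmeasurable_cst.
by under eq_fun do rewrite big_cons; apply: bmeasurableM.
Qed.

End BoundedMeasurable.

Section ComplexExpectation.
Variables (R : realType) (d : measure_display) (O : measurableType d).
Variable P : probability O R.
Implicit Types f g : O -> R[i].
Local Notation E := (cexpect P).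

Lemma bounded_integrable (g : O -> R) : measurable_fun setT g ->
  (exists M, forall w, `|g w| <= M) -> P.-integrable setT (EFin \o g).
Proof.
move=> mg [M gM]; apply: measurable_bounded_integrable => //.
  by rewrite (le_lt_trans (probability_le1 P measurableT)) ?ltry.
exists M; split; first exact: num_real.
by move=> x Mx y _; apply: le_trans (gM y) (ltW Mx).
Qed.

Lemma bmeasurable_integrable f : bmeasurable f ->
  P.-integrable setT (EFin \o (fun w => complex.Re (f w)))
  /\ P.-integrable setT (EFin \o (fun w => complex.Im (f w))).
Proof.
move=> [[fRe fIm] [M fM]].
have partM (part : R[i] -> R) : (forall z, `|part z|%:C%C <= `|z|) ->
    exists N, forall w, `|part (f w)| <= N.
  move=> hpart; exists (complex.Re M) => w.
  by have := le_trans (hpart _) (fM w); rewrite lecE => /andP[].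
split; apply: bounded_integrable => //; apply: partM; [exact: normc_ge_Re | exact: normc_ge_Im].
Qed.

Lemma eq_cexpect f g : f =1 g -> E f = E g.
Proof. by move=> /funext ->. Qed.

Lemma cexpect_cst c : E (fun=> c) = c.
Proof.
rewrite /cexpect !Rintegral_cst // [fine _](_ : _ = 1) ?mulr1; first by case: c.
exact: (congr1 fine (probability_setT P)).
Qed.

Lemma cexpectD f g : bmeasurable f -> bmeasurable g -> E (fun w => f w + g w) = E f + E g.
Proof.
move=> /bmeasurable_integrable[fRe fIm] /bmeasurable_integrable[gRe gIm]; rewrite /cexpect.
under eq_Rintegral do rewrite ReD; under [in X in Complex _ X]eq_Rintegral do rewrite ImD.
by rewrite !RintegralD.
Qed.

Lemma cexpectZl c f : bmeasurable f -> E (fun w => c * f w) = c * E f.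
Proof.
move=> /bmeasurable_integrable[fRe fIm]; rewrite /cexpect.
have intZ k (g : O -> R) : P.-integrable setT (EFin \o g) ->
    P.-integrable setT (EFin \o (fun w => k * g w)).
  move=> ig; apply: (eq_integrable measurableT (fun w => k%:E * (g w)%:E)%E).
    by move=> w _; rewrite /= EFinM.
  exact: integrableZl.
under eq_Rintegral do rewrite ReM; under [in X in Complex _ X]eq_Rintegral do rewrite ImM.
by rewrite RintegralB ?RintegralD ?RintegralZl ?intZ //; case: c.
Qed.

Lemma cexpect_sum (I : Type) (r : seq I) (F : I -> O -> R[i]) :
  (forall i, bmeasurable (F i)) -> E (fun w => \sum_(i <- r) F i w) = \sum_(i <- r) E (F i).
Proof.
move=> mF; elim: r => [|i r IHr].
  by rewrite big_nil -[RHS](cexpect_cst 0); apply: eq_cexpect => w; rewrite big_nil.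
rewrite big_cons -IHr -cexpectD //; last exact: bmeasurable_sum.
by apply: eq_cexpect => w; rewrite big_cons.
Qed.

End ComplexExpectation.

(** * Left invariance of the Haar law *)

Section HaarInvariance.
Variables (R : realType) (d : nat).
Local Notation M := 'M[R[i]]_d.
Local Notation borelM := (g_sigma_algebraType (@open M)).

Lemma lipschitz1_continuous (phi : R[i] -> R) :
  (forall z w, `|phi z - phi w|%:C%C <= `|z - w|) -> continuous phi.
Proof.
move=> phiL z A /nbhs_ballP[e e0 eA]; apply/nbhs_ballP.
exists e%:C%C; first by rewrite /= -[0]/(0%:C%C) ltcR.
move=> w; rewrite -ball_normE /= => zw; apply: eA.
by rewrite -ball_normE /= -ltcR (le_lt_trans (phiL _ _)).
Qed.

Lemma continuous_measurable (phi : M -> R) :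
  continuous phi -> measurable_fun setT (phi : borelM -> R).
Proof.
move=> cphi; apply: (measurability _ (RGenOpens.measurableE R)).
move=> _ [_ [a [b ->] <-]]; rewrite setTI.
by apply: sub_sigma_algebra; apply: (proj1 (continuousP _) cphi); apply: interval_open.
Qed.

Lemma cmeasurable_coord (i j : 'I_d) : cmeasurable (fun B : borelM => (B : M) i j).
Proof.
have coordL (phi : R[i] -> R) : (forall z w, `|phi z - phi w|%:C%C <= `|z - w|) ->
    measurable_fun setT (fun B : borelM => phi ((B : M) i j)).
  move=> phiL; apply: continuous_measurable => B.
  by apply: continuous_comp; [exact: coord_continuous | exact: lipschitz1_continuous].
split; apply: coordL => z w.
  by rewrite -(raddfB (@complex.Re R : Rcomplex R -> R)) normc_ge_Re.
by rewrite -(raddfB (@complex.Im R : Rcomplex R -> R)) normc_ge_Im.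
Qed.

Lemma unitary_rowsE (V : M) : unitary V ->
  forall i k, \sum_b V i b * (V k b)^* = (i == k)%:R.
Proof.
move=> uV i k; have := congr1 (fun A : M => A i k) uV; rewrite /= !mxE => <-.
by apply: eq_bigr => b _; rewrite !mxE.
Qed.

Lemma unitary_colsE (V : M) : unitary V ->
  forall a b, \sum_m V m a * (V m b)^* = (a == b)%:R.
Proof.
move=> /mulmx1C uV a b; have := congr1 (fun A : M => A b a) uV; rewrite /= !mxE eq_sym => <-.
by apply: eq_bigr => m _; rewrite !mxE mulrC.
Qed.

Lemma unitary_coord_le1 (V : M) : unitary V -> forall i j, `|V i j| <= 1.
Proof.
move=> uV i j; rewrite -(ler_pXn2r (_ : 0 < 2)%N) ?nnegrE ?expr1n //.
have := unitary_rowsE uV i i; rewrite eqxx (bigD1 j) //= -normCK => /esym sum1.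
by rewrite [X in _ <= X]sum1 lerDl sumr_ge0 // => b _; rewrite -normCK exprn_ge0.
Qed.

Variables (dO : measure_display) (O : measurableType dO) (P : probability O R).

Lemma haar_bmeasurable_coord (U : O -> M) : haar_unitary P U ->
  forall i j, bmeasurable (fun w => U w i j).
Proof.
move=> [uU mU _] i j; split; first exact: mU.
by exists 1 => w; apply: unitary_coord_le1.
Qed.

Lemma haar_Rintegral_mulmx (U : O -> M) (V : M) (g : borelM -> R) :
  haar_unitary P U -> unitary V -> measurable_fun setT g ->
  measurable_fun setT (fun w => g (U w)) -> measurable_fun setT (fun w => g (V *m U w)) ->
  P.-integrable setT (EFin \o (fun w => g (U w))) ->
  P.-integrable setT (EFin \o (fun w => g (V *m U w))) ->
  Rintegral P setT (fun w => g (V *m U w)) = Rintegral P setT (fun w => g (U w)).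
Proof.
move=> [_ _ lawU] uV mg mgU mgVU igU igVU; rewrite /Rintegral; congr fine.
have pushE (X : O -> R) : measurable_fun setT X -> P.-integrable setT (EFin \o X) ->
    (\int[P]_x (X x)%:E = \int[pushforward P X]_y y%:E)%E.
  move=> mX iX; rewrite integral_pushforward ?preimage_setT //.
rewrite (pushE _ mgVU igVU) (pushE _ mgU igU); apply: eq_measure_integral => A mA _.
have gA : <<s [set B : set M | open B] >> (g @^-1` A).
  by have := mg measurableT A mA; rewrite setTI.
exact/esym/(lawU V uV _ gA).
Qed.

Lemma haar_cexpect_mulmx (U : O -> M) (V : M) (h : borelM -> R[i]) :
  haar_unitary P U -> unitary V -> cmeasurable h ->
  bmeasurable (fun w => h (U w)) -> bmeasurable (fun w => h (V *m U w)) ->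
  cexpect P (fun w => h (V *m U w)) = cexpect P (fun w => h (U w)).
Proof.
move=> haarU uV [hRe hIm] mhU mhVU.
have [[Ure Uim] _] := mhU; have [[VUre VUim] _] := mhVU.
have [iUre iUim] := bmeasurable_integrable P mhU.
have [iVUre iVUim] := bmeasurable_integrable P mhVU.
rewrite /cexpect; congr Complex.
  exact: (haar_Rintegral_mulmx (g := fun B => complex.Re (h B))).
exact: (haar_Rintegral_mulmx (g := fun B => complex.Im (h B))).
Qed.

End HaarInvariance.

(** * Column moments *)

Section ColumnMoments.
Variables (R : realType) (d : nat).
Local Notation M := 'M[R[i]]_d.
Implicit Types (s t : seq 'I_d) (B : M).

Definition colmoment s t B : R[i] :=
  \sum_a (\prod_(k <- s) B k a) * \prod_(k <- t) (B k a)^*.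

Lemma cmeasurable_colmoment s t :
  cmeasurable (fun B : g_sigma_algebraType (@open M) => colmoment s t B).
Proof.
apply: cmeasurable_sum => a; apply: cmeasurableM; apply: cmeasurable_prod => k.
  exact: cmeasurable_coord.
by apply: cmeasurableJ; apply: cmeasurable_coord.
Qed.

Lemma bmeasurable_colmoment (dT : measure_display) (T : measurableType dT) (F : T -> M) s t :
  (forall k a, bmeasurable (fun w => F w k a)) -> bmeasurable (fun w => colmoment s t (F w)).
Proof.
move=> mF; apply: bmeasurable_sum => a; apply: bmeasurableM; apply: bmeasurable_prod => k //.
exact: bmeasurableJ.
Qed.

Lemma colmoment_perm s s' t t' B : perm_eq s s' -> perm_eq t t' ->
  colmoment s t B = colmoment s' t' B.
Proof. by move=> ss' tt'; apply: eq_bigr => a _; rewrite (perm_big _ ss') (perm_big _ tt'). Qed.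

Lemma colmoment_nil B : colmoment [::] [::] B = d%:R.
Proof.
rewrite /colmoment (eq_bigr (fun=> 1)) ?sumr_const ?card_ord // => a _.
by rewrite !big_nil mulr1.
Qed.

(* Insert the unit norm [\sum_m |B m a|^2 = 1] of each column. *)
Lemma colmoment_cons s t B : unitary B ->
  colmoment s t B = \sum_m colmoment (m :: s) (m :: t) B.
Proof.
move=> uB; rewrite /colmoment exchange_big /=; apply: eq_bigr => a _.
have := unitary_colsE uB a a; rewrite eqxx /= mulr1n => col1.
rewrite -[LHS]mulr1 -col1 mulr_sumr.
by apply: eq_bigr => m _; rewrite !big_cons; ring.
Qed.

End ColumnMoments.

(** * Phase and rotation invariance of the moments *)

Lemma expCi_eq1 (C : numClosedFieldType) n : ('i ^+ n == 1 :> C) = (4 %| n)%N.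
Proof.
have i2 : 'i ^+ 2 != 1 :> C.
  by rewrite sqrCi -subr_eq0 -opprD oppr_eq0 -mulr2n pnatr_eq0.
have i4 : 'i ^+ 4 = 1 :> C by rewrite -[4%N]/(2 * 2)%N exprM sqrCi sqrrN expr1n.
rewrite {1}(divn_eq n 4) exprD mulnC exprM i4 expr1n mul1r /dvdn.
have : (n %% 4 < 4)%N by rewrite ltn_mod.
case: (n %% 4)%N => [|[|[|[|r]]]] //= _; rewrite ?expr0 ?eqxx //; apply/negbTE.
- by rewrite expr1; apply: (contraNneq _ i2) => ->; rewrite expr1n.
- by [].
- by rewrite exprS sqrCi mulrN1 eqr_oppLR; apply: (contraNneq _ i2) => ->; rewrite sqrrN expr1n.
Qed.

Section HaarMoments.
Variables (R : realType) (d : nat).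
Local Notation M := 'M[R[i]]_d.
Variables (dO : measure_display) (O : measurableType dO) (P : probability O R).
Variable U : O -> M.
Hypothesis haarU : haar_unitary P U.
Implicit Types (s t : seq 'I_d) (B V : M).

Definition moment s t := cexpect P (fun w => colmoment s t (U w)).

Lemma bmeasurable_colmomentU s t : bmeasurable (fun w => colmoment s t (U w)).
Proof. exact: (bmeasurable_colmoment _ _ (haar_bmeasurable_coord haarU)). Qed.

Lemma moment_mulmx V s t : unitary V ->
  cexpect P (fun w => colmoment s t (V *m U w)) = moment s t.
Proof.
move=> uV; apply: (haar_cexpect_mulmx (h := colmoment s t) haarU uV).
- exact: cmeasurable_colmoment.
- exact: bmeasurable_colmomentU.
apply: (bmeasurable_colmoment (F := fun w => V *m U w)) => k a.
under eq_fun do rewrite mxE.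
apply: bmeasurable_sum => l; apply: bmeasurableM; first exact: bmeasurable_cst.
exact: (haar_bmeasurable_coord haarU l a).
Qed.

Lemma moment_perm s s' t t' : perm_eq s s' -> perm_eq t t' -> moment s t = moment s' t'.
Proof. by move=> ss' tt'; apply: eq_cexpect => w; apply: colmoment_perm. Qed.

Lemma moment_nil : moment [::] [::] = d%:R.
Proof. by rewrite -[RHS](cexpect_cst P); apply: eq_cexpect => w; apply: colmoment_nil. Qed.

Lemma moment_cons s t : moment s t = \sum_m moment (m :: s) (m :: t).
Proof.
rewrite -cexpect_sum => [|m]; last exact: bmeasurable_colmomentU.
by apply: eq_cexpect => w; apply: colmoment_cons; case: haarU.
Qed.

Definition phase_mx (j : 'I_d) (z : R[i]) : M := diag_mx (\row_k (if k == j then z else 1)).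

Lemma phase_mx_unitary j z : z * z^* = 1 -> unitary (phase_mx j z).
Proof.
move=> zJ; rewrite /unitary /phase_mx map_diag_mx tr_diag_mx mulmx_diag.
rewrite -[1%:M]diag_const_mx; congr diag_mx; apply/rowP => k; rewrite !mxE.
by case: ifP => _; rewrite ?rmorph1 ?mulr1.
Qed.

Lemma colmoment_phase j z s t B : colmoment s t (phase_mx j z *m B) =
  z ^+ count_mem j s * z^* ^+ count_mem j t * colmoment s t B.
Proof.
have prod_phase (x : R[i]) (F : 'I_d -> R[i]) (u : seq 'I_d) :
    \prod_(k <- u) ((if k == j then x else 1) * F k) = x ^+ count_mem j u * \prod_(k <- u) F k.
  elim: u => [|k u IHu]; first by rewrite !big_nil mulr1.
  by rewrite !big_cons IHu /= eq_sym; case: eqP => _; rewrite ?exprS; ring.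
rewrite /colmoment mulr_sumr; apply: eq_bigr => a _; rewrite mul_diag_mx.
under eq_bigr do rewrite !mxE.
under [in X in _ * X]eq_bigr do rewrite !mxE rmorphM /= (fun_if Num.Def.conjC) conjC1.
by rewrite !prod_phase; ring.
Qed.

Lemma moment_eq0_count j s t :
  count_mem j s != count_mem j t %[mod 4] -> moment s t = 0.
Proof.
move=> cnt; have iJ : 'i * 'i^* = 1 :> R[i] by rewrite conjCi mulrN -expr2 sqrCi opprK.
have := moment_mulmx s t (phase_mx_unitary j iJ).
under eq_cexpect do rewrite colmoment_phase.
rewrite cexpectZl; last exact: bmeasurable_colmomentU.
have -> : 'i^* = 'i ^+ 3 :> R[i] by rewrite conjCi exprS sqrCi mulrN1.
rewrite -exprM -exprD => invariant.
have /eqP : (1 - 'i ^+ (count_mem j s + 3 * count_mem j t)) * moment s t = 0.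
  by rewrite mulrBl mul1r invariant subrr.
rewrite mulf_eq0 subr_eq0 eq_sym expCi_eq1 => /orP[|/eqP //].
by move: cnt => /eqP; lia.
Qed.

(* ['i] has order 4: the counts [i <= n < 4] stay distinct modulo 4. *)
Lemma moment_expand_diag n j (a : 'I_n.+1 -> 'I_n.+1 -> R[i]) (w : 'I_n.+1 -> seq 'I_d) :
  (n < 4)%N -> (forall i, count_mem j (w i) = i) ->
  cexpect P (fun o => \sum_i \sum_i' a i i' * colmoment (w i) (w i') (U o))
  = \sum_i a i i * moment (w i) (w i).
Proof.
move=> n4 cw; have mterm i i' : bmeasurable (fun o => a i i' * colmoment (w i) (w i') (U o)).
  by apply: bmeasurableM; [exact: bmeasurable_cst | exact: bmeasurable_colmomentU].
rewrite cexpect_sum => [|i]; last exact: bmeasurable_sum.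
apply: eq_bigr => i _; rewrite cexpect_sum // (bigD1 i) //= big1 ?addr0 => [|i' i'i].
  by rewrite cexpectZl //; apply: bmeasurable_colmomentU.
rewrite cexpectZl -/(moment _ _) ?(moment_eq0_count (j := j)) ?mulr0 ?cw //.
  have /eqP i'i_nat : (i' : nat) != i by [].
  by apply/eqP; have := ltn_ord i; have := ltn_ord i'; lia.
exact: bmeasurable_colmomentU.
Qed.

End HaarMoments.

Section GivensRotation.
Variables (R : realType) (d : nat).
Local Notation M := 'M[R[i]]_d.
Variables (p q : 'I_d) (c s : R[i]).
Hypotheses (pq : p != q) (cR : c \is Num.real) (sR : s \is Num.real) (cs1 : c ^+ 2 + s ^+ 2 = 1).
Implicit Types (B : M) (tail : seq 'I_d).

Definition givens : M := \matrix_(k, l)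
  (if k == p then (if l == p then c else if l == q then - s else 0)
   else if k == q then (if l == p then s else if l == q then c else 0)
   else (k == l)%:R).

Lemma givens_mulmxE B k a : (givens *m B) k a =
  if k == p then c * B p a - s * B q a
  else if k == q then s * B p a + c * B q a else B k a.
Proof.
have sum_pq (x y : R[i]) : \sum_l (if l == p then x else if l == q then y else 0) * B l a
    = x * B p a + y * B q a.
  rewrite (bigD1 p) //= (bigD1 q) 1?eq_sym //= eqxx eq_sym (negbTE pq) eqxx.
  by rewrite big1 ?addr0 // => l /andP[/negbTE -> /negbTE ->]; rewrite mul0r.
rewrite mxE; under eq_bigr do rewrite mxE.
case: (k =P p) => [_|_]; first by rewrite sum_pq mulNr.
by case: (k =P q) => [_|_]; [rewrite sum_pq | apply: sum_delta].
Qed.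

Lemma givens_real : map_mx conjc givens = givens.
Proof.
apply/matrixP => k l; rewrite !mxE -[conjc _]/(_^*).
by repeat case: ifP => _;
  rewrite ?conjC0 ?conjC_nat ?raddfN /= ?(conj_Creal cR) ?(conj_Creal sR).
Qed.

Lemma givens_unitary : unitary givens.
Proof.
apply/matrixP => k l; rewrite /unitary givens_real givens_mulmxE !mxE.
have qp : q != p by rewrite eq_sym.
rewrite !eqxx ?(negbTE pq) ?(negbTE qp).
have [ekp|kp] := eqVneq k p; last have [ekq|kq] := eqVneq k q;
  (have [elp|lp] := eqVneq l p; last have [elq|lq] := eqVneq l q); subst;
  rewrite ?eqxx ?(negbTE pq) ?(negbTE qp) ?(negbTE kp) ?(negbTE kq) 1?eq_sym
    ?(negbTE lp) ?(negbTE lq) //=; try ring.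
all: by rewrite -cs1; ring.
Qed.

Definition rot_word n tail (i : nat) := nseq i p ++ nseq (n - i) q ++ tail.

Definition rot_coef n (i : nat) := c ^+ i * (- s) ^+ (n - i) *+ 'C(n, i).

Lemma count_rot_word n tail (i : nat) : p \notin tail -> (i <= n)%N ->
  count_mem p (rot_word n tail i) = i.
Proof.
move=> ptail le_in; rewrite !count_cat !count_nseq /= eqxx eq_sym (negbTE pq).
by rewrite (count_memPn ptail); lia.
Qed.

Lemma givens_pow n (x y : R[i]) :
  (c * x - s * y) ^+ n = \sum_(i < n.+1) rot_coef n i * (x ^+ i * y ^+ (n - i)).
Proof.
rewrite addrC -mulNr exprDn; apply: eq_bigr => i _.
by rewrite /rot_coef !exprMn -!mulrnAl; ring.
Qed.

Lemma colmoment_givens n tail B : p \notin tail -> q \notin tail ->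
  colmoment (nseq n p ++ tail) (nseq n p ++ tail) (givens *m B) =
  \sum_(i < n.+1) \sum_(i' < n.+1)
    rot_coef n i * rot_coef n i' * colmoment (rot_word n tail i) (rot_word n tail i') B.
Proof.
move=> ptail qtail.
have prod_word (F : 'I_d -> R[i]) i :
    \prod_(k <- rot_word n tail i) F k = F p ^+ i * F q ^+ (n - i) * \prod_(k <- tail) F k.
  by rewrite !big_cat /= !big_nseq !iter_mulr_1 mulrA.
have prod_tail a (F : R[i] -> R[i]) :
    \prod_(k <- tail) F ((givens *m B) k a) = \prod_(k <- tail) F (B k a).
  apply: eq_big_seq => k ktail; rewrite givens_mulmxE.
  by rewrite (negbTE (memPn ptail k ktail)) (negbTE (memPn qtail k ktail)).
rewrite /colmoment; under [RHS]eq_bigr do under eq_bigr do rewrite mulr_sumr.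
under [RHS]eq_bigr do rewrite exchange_big; rewrite [RHS]exchange_big.
apply: eq_bigr => a _.
rewrite !big_cat /= !big_nseq !iter_mulr_1 (prod_tail a id) (prod_tail a (fun z => z^*)).
rewrite givens_mulmxE eqxx rmorphB !rmorphM /= (conj_Creal cR) (conj_Creal sR).
rewrite !givens_pow !mulr_suml.
apply: eq_bigr => i _; rewrite mulr_sumr; apply: eq_bigr => i' _.
by rewrite !prod_word; ring.
Qed.

Variables (dO : measure_display) (O : measurableType dO) (P : probability O R).
Variable U : O -> M.
Hypothesis haarU : haar_unitary P U.

Lemma moment_givens n tail : (n < 4)%N -> p \notin tail -> q \notin tail ->
  moment P U (nseq n p ++ tail) (nseq n p ++ tail) =
  \sum_(i < n.+1) rot_coef n i ^+ 2 * moment P U (rot_word n tail i) (rot_word n tail i).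
Proof.
move=> n4 ptail qtail; rewrite -(moment_mulmx haarU _ _ givens_unitary).
under eq_cexpect do rewrite colmoment_givens //.
rewrite (moment_expand_diag haarU (j := p)) //.
by move=> i; apply: count_rot_word => //; rewrite -ltnS.
Qed.

End GivensRotation.

(** * Weingarten formulas in degrees two and three *)

(* The Givens identities for (c, s) = (3/5, 4/5) and (4/5, 3/5) form a linear system in
   the moments; the rational multipliers below eliminate all but one unknown. *)
Section Elimination.
Variable F : numFieldType.
Let c : F := 3%:R / 5%:R.
Let s : F := 4%:R / 5%:R.

Lemma eliminate3 (x u v : F) :
  x = c ^+ 6 * x + 9 * c ^+ 4 * s ^+ 2 * u + 9 * c ^+ 2 * s ^+ 4 * v + s ^+ 6 * x ->
  x = s ^+ 6 * x + 9 * s ^+ 4 * c ^+ 2 * u + 9 * s ^+ 2 * c ^+ 4 * v + c ^+ 6 * x ->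
  3 * u = x.
Proof.
move=> e1 e2; apply/eqP; rewrite -subr_eq0; apply/eqP.
transitivity (625%:R / 336%:R
      * (x - (c ^+ 6 * x + 9 * c ^+ 4 * s ^+ 2 * u + 9 * c ^+ 2 * s ^+ 4 * v + s ^+ 6 * x))
    - 625%:R / 189%:R
      * (x - (s ^+ 6 * x + 9 * s ^+ 4 * c ^+ 2 * u + 9 * s ^+ 2 * c ^+ 4 * v + c ^+ 6 * x))).
  by rewrite /c /s; field.
by rewrite -e1 -e2 !subrr !mulr0 subrr.
Qed.

Lemma eliminate2 (x y y' z : F) :
  y = c ^+ 4 * y + 4 * c ^+ 2 * s ^+ 2 * z + s ^+ 4 * y' -> 3 * y = x -> 3 * y' = x ->
  6 * z = x.
Proof.
move=> e y3 y'3; apply/eqP; rewrite -subr_eq0; apply/eqP.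
transitivity (- 625%:R / 96%:R * (y - (c ^+ 4 * y + 4 * c ^+ 2 * s ^+ 2 * z + s ^+ 4 * y'))
    + 17%:R / 9%:R * (3 * y - x) - 8%:R / 9%:R * (3 * y' - x)).
  by rewrite /c /s; field.
by rewrite -e y3 y'3 !subrr !mulr0 addr0 subrr.
Qed.

End Elimination.

Section ThirdMoments.
Variables (R : realType) (d : nat).
Variables (dO : measure_display) (O : measurableType dO) (P : probability O R).
Variable U : O -> 'M[R[i]]_d.
Hypothesis haarU : haar_unitary P U.
Local Notation mom := (moment P U).

Lemma moment_givens3 (p q : 'I_d) (c s : R[i]) :
  p != q -> c \is Num.real -> s \is Num.real -> c ^+ 2 + s ^+ 2 = 1 ->
  mom [:: p; p; p] [:: p; p; p] =
  c ^+ 6 * mom [:: p; p; p] [:: p; p; p] + 9 * c ^+ 4 * s ^+ 2 * mom [:: p; p; q] [:: p; p; q]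
  + 9 * c ^+ 2 * s ^+ 4 * mom [:: p; q; q] [:: p; q; q] + s ^+ 6 * mom [:: q; q; q] [:: q; q; q].
Proof.
move=> pq cR sR cs1.
have := moment_givens pq cR sR cs1 haarU (n := 3) (tail := [::]) isT isT isT.
rewrite !big_ord_recl big_ord0 /rot_coef /rot_word /= /bump /= !addn0 !add1n !subSS !subn0.
rewrite bin0 bin1 binn (_ : 'C(3, 2) = 3) //.
by move=> e; rewrite {1}e; ring.
Qed.

Lemma moment_givens2 (p q r : 'I_d) (c s : R[i]) :
  p != q -> r != p -> r != q -> c \is Num.real -> s \is Num.real -> c ^+ 2 + s ^+ 2 = 1 ->
  mom [:: p; p; r] [:: p; p; r] =
  c ^+ 4 * mom [:: p; p; r] [:: p; p; r] + 4 * c ^+ 2 * s ^+ 2 * mom [:: p; q; r] [:: p; q; r]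
  + s ^+ 4 * mom [:: q; q; r] [:: q; q; r].
Proof.
move=> pq rp rq cR sR cs1; have tail_r (k : 'I_d) : r != k -> k \notin [:: r].
  by rewrite inE eq_sym.
have := moment_givens pq cR sR cs1 haarU (n := 2) isT (tail_r _ rp) (tail_r _ rq).
rewrite !big_ord_recl big_ord0 /rot_coef /rot_word /= /bump /= !addn0 !add1n !subSS !subn0.
rewrite bin0 binn (_ : 'C(2, 1) = 2) //.
by move=> e; rewrite {1}e; ring.
Qed.

Let three_fifths_real : (3%:R / 5%:R : R[i]) \is Num.real.
Proof. by rewrite rpred_div ?realn. Qed.

Let four_fifths_real : (4%:R / 5%:R : R[i]) \is Num.real.
Proof. by rewrite rpred_div ?realn. Qed.

Let pythagorean_345 : (3%:R / 5%:R : R[i]) ^+ 2 + (4%:R / 5%:R) ^+ 2 = 1.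
Proof. by field. Qed.

Lemma moment_ppp_indep (p q : 'I_d) : p != q ->
  mom [:: p; p; p] [:: p; p; p] = mom [:: q; q; q] [:: q; q; q].
Proof.
move=> pq; rewrite {1}(moment_givens3 pq (real0 _) (real1 _)); first ring.
by rewrite expr0n expr1n add0r.
Qed.

Lemma moment_ppq (p q : 'I_d) : p != q ->
  3 * mom [:: p; p; q] [:: p; p; q] = mom [:: p; p; p] [:: p; p; p].
Proof.
move=> pq; apply: (eliminate3 (v := mom [:: p; q; q] [:: p; q; q])).
  by rewrite {1}(moment_givens3 pq three_fifths_real four_fifths_real) // (moment_ppp_indep pq).
rewrite {1}(moment_givens3 pq four_fifths_real three_fifths_real) ?(moment_ppp_indep pq) //.
by rewrite addrC.
Qed.

Lemma moment_pqr (p q r : 'I_d) : p != q -> r != p -> r != q ->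
  6 * mom [:: p; q; r] [:: p; q; r] = mom [:: p; p; p] [:: p; p; p].
Proof.
move=> pq rp rq.
apply: (eliminate2 (y := mom [:: p; p; r] [:: p; p; r]) (y' := mom [:: q; q; r] [:: q; q; r])).
- exact: (moment_givens2 pq rp rq three_fifths_real four_fifths_real pythagorean_345).
- by rewrite moment_ppq // eq_sym.
- by rewrite moment_ppq ?(moment_ppp_indep pq) // eq_sym.
Qed.

End ThirdMoments.

Lemma perm_eq2P (T : eqType) (a b u v : T) : perm_eq [:: a; b] [:: u; v] ->
  (u = a /\ v = b) \/ (u = b /\ v = a).
Proof.
move=> ab_uv; have : u \in [:: a; b] by rewrite (perm_mem ab_uv) mem_head.
rewrite !inE => /orP[/eqP eu | /eqP eu]; subst u.
  by move: ab_uv; rewrite perm_cons => /perm_mem/(_ v); rewrite !inE eqxx => /eqP ->; left.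
have : perm_eq [:: b; a] [:: b; v].
  by apply: perm_trans ab_uv; apply/permP => f /=; lia.
by rewrite perm_cons => /perm_mem/(_ v); rewrite !inE eqxx => /eqP ->; right.
Qed.

Lemma perm_eq3P (T : eqType) (a b c u v w : T) : perm_eq [:: a; b; c] [:: u; v; w] ->
  [/\ u = a, v = b & w = c] \/ [/\ u = a, v = c & w = b] \/ [/\ u = b, v = a & w = c] \/
  [/\ u = b, v = c & w = a] \/ [/\ u = c, v = a & w = b] \/ [/\ u = c, v = b & w = a].
Proof.
move=> abc_uvw; have : u \in [:: a; b; c] by rewrite (perm_mem abc_uvw) mem_head.
rewrite !inE => /or3P[/eqP eu | /eqP eu | /eqP eu]; subst u.
- by move: abc_uvw; rewrite perm_cons => /perm_eq2P[[-> ->]|[-> ->]]; [left | right; left].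
- have : perm_eq [:: b; a; c] [:: b; v; w].
    by apply: perm_trans abc_uvw; apply/permP => f /=; lia.
  by rewrite perm_cons => /perm_eq2P[[-> ->]|[-> ->]]; [do 2 right; left | do 3 right; left].
- have : perm_eq [:: c; a; b] [:: c; v; w].
    by apply: perm_trans abc_uvw; apply/permP => f /=; lia.
  by rewrite perm_cons => /perm_eq2P[[-> ->]|[-> ->]]; [do 4 right; left | do 5 right].
Qed.

Section Weingarten.
Variables (R : realType) (d : nat).
Variables (dO : measure_display) (O : measurableType dO) (P : probability O R).
Variable U : O -> 'M[R[i]]_d.
Hypothesis haarU : haar_unitary P U.
Local Notation mom := (moment P U).

(* The number of permutations sigma of {1, 2, 3} such that x_i = z_(sigma i). *)
Definition nperm3 (x1 x2 x3 z1 z2 z3 : 'I_d) : R[i] :=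
  (x1 == z1)%:R * (x2 == z2)%:R * (x3 == z3)%:R + (x1 == z1)%:R * (x2 == z3)%:R * (x3 == z2)%:R
  + (x1 == z2)%:R * (x2 == z1)%:R * (x3 == z3)%:R + (x1 == z2)%:R * (x2 == z3)%:R * (x3 == z1)%:R
  + (x1 == z3)%:R * (x2 == z1)%:R * (x3 == z2)%:R + (x1 == z3)%:R * (x2 == z2)%:R * (x3 == z1)%:R.

Lemma sum_nperm3 (i j k l : 'I_d) :
  \sum_m nperm3 m i j m k l = (d + 2)%:R * ((i == k)%:R * (j == l)%:R + (i == l)%:R * (j == k)%:R).
Proof.
set A := _ + _; have nperm3E (m : 'I_d) : nperm3 m i j m k l = A * (1 + (k == m)%:R + (l == m)%:R).
  rewrite /nperm3 /A eqxx; have [ekm|km] := eqVneq k m; have [elm|lm] := eqVneq l m;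
    subst; rewrite ?eqxx ?(eq_sym m) ?(negbTE km) ?(negbTE lm) /=; ring.
have sum_ind (a : 'I_d) : \sum_m (a == m)%:R = 1 :> R[i].
  by rewrite -[RHS](sum_delta a (fun=> 1)); apply: eq_bigr => m _; rewrite mulr1.
under eq_bigr do rewrite nperm3E.
by rewrite -mulr_sumr !big_split /= !sum_ind sumr_const card_ord natrD; ring.
Qed.

Lemma nperm3_perm (x1 x2 x3 z1 z2 z3 : 'I_d) : perm_eq [:: x1; x2; x3] [:: z1; z2; z3] ->
  nperm3 x1 x2 x3 z1 z2 z3 = nperm3 x1 x2 x3 x1 x2 x3.
Proof.
by case/perm_eq3P=> [|[|[|[|[|]]]]] [-> -> ->]; rewrite /nperm3; ring.
Qed.

Lemma nperm3_eq0 (x1 x2 x3 z1 z2 z3 : 'I_d) : ~~ perm_eq [:: x1; x2; x3] [:: z1; z2; z3] ->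
  nperm3 x1 x2 x3 z1 z2 z3 = 0.
Proof.
move=> xz; have term0 (a b c : 'I_d) : ~~ perm_eq [:: x1; x2; x3] [:: a; b; c] ->
    (x1 == a)%:R * (x2 == b)%:R * (x3 == c)%:R = 0 :> R[i].
  by case: eqP => [<-|]; case: eqP => [<-|]; case: eqP => [<-|]; rewrite ?perm_refl ?mulr0 ?mul0r.
rewrite /nperm3 !term0 ?addr0 //; apply: contra xz => /perm_trans; apply; apply/permP => f /=; lia.
Qed.

Section FixedBase.
Variable p0 : 'I_d.
Let alpha := mom [:: p0; p0; p0] [:: p0; p0; p0].

Lemma moment_pppE (p : 'I_d) : mom [:: p; p; p] [:: p; p; p] = alpha.
Proof. by have [->|pp0] := eqVneq p p0; last exact: moment_ppp_indep. Qed.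

Lemma moment3_diag (x1 x2 x3 : 'I_d) :
  mom [:: x1; x2; x3] [:: x1; x2; x3] = alpha / 6 * nperm3 x1 x2 x3 x1 x2 x3.
Proof.
have perm_moment (u v : seq 'I_d) : perm_eq u v -> mom u u = mom v v.
  by move=> uv; apply: moment_perm.
case: (eqVneq x1 x2) => [<-|n12]; case: (eqVneq x1 x3) => [<-|n13].
- by rewrite moment_pppE /nperm3 !eqxx /=; field.
- rewrite -(moment_pppE x1) -(moment_ppq haarU n13) /nperm3 !eqxx (eq_sym x3 x1).
  by rewrite (negbTE n13) /=; field.
- rewrite (perm_moment _ [:: x1; x1; x2]); last by apply/permP => f /=; lia.
  rewrite -(moment_pppE x1) -(moment_ppq haarU n12) /nperm3 !eqxx (eq_sym x2 x1).
  by rewrite (negbTE n12) /=; field.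
case: (x2 =P x3) => [<-|/eqP n23].
  rewrite (perm_moment _ [:: x2; x2; x1]); last by apply/permP => f /=; lia.
  have n21 : x2 != x1 by rewrite eq_sym.
  rewrite -(moment_pppE x2) -(moment_ppq haarU n21) /nperm3 !eqxx (eq_sym x2 x1).
  by rewrite (negbTE n12) /=; field.
have n31 : x3 != x1 by rewrite eq_sym.
have n32 : x3 != x2 by rewrite eq_sym.
rewrite -(moment_pppE x1) -(moment_pqr haarU n12 n31 n32) /nperm3 !eqxx.
rewrite (eq_sym x2 x1) (eq_sym x3 x1) (eq_sym x3 x2).
by rewrite (negbTE n12) (negbTE n13) (negbTE n23) /=; field.
Qed.

Lemma moment3_alpha (x1 x2 x3 z1 z2 z3 : 'I_d) :
  mom [:: x1; x2; x3] [:: z1; z2; z3] = alpha / 6 * nperm3 x1 x2 x3 z1 z2 z3.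
Proof.
have [xz|xz] := boolP (perm_eq [:: x1; x2; x3] [:: z1; z2; z3]).
  by rewrite (nperm3_perm xz) -moment3_diag; apply: moment_perm; rewrite // perm_sym.
rewrite nperm3_eq0 // mulr0; move: xz; rewrite /perm_eq => /allPn[j _ /eqP cj].
apply: (moment_eq0_count haarU (j := j)); apply/eqP.
have : (count_mem j [:: x1; x2; x3] <= 3)%N := count_size _ _.
by have : (count_mem j [:: z1; z2; z3] <= 3)%N := count_size _ _; lia.
Qed.

Lemma moment2_alpha (i j k l : 'I_d) : mom [:: i; j] [:: k; l] =
  alpha / 6 * (d + 2)%:R * ((i == k)%:R * (j == l)%:R + (i == l)%:R * (j == k)%:R).
Proof.
rewrite (moment_cons haarU); under eq_bigr do rewrite moment3_alpha.
by rewrite -mulr_sumr sum_nperm3 mulrA.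
Qed.

Lemma moment1_alpha (i k : 'I_d) :
  mom [:: i] [:: k] = alpha / 6 * (d + 2)%:R * (d + 1)%:R * (i == k)%:R.
Proof.
rewrite (moment_cons haarU); under eq_bigr do rewrite moment2_alpha eqxx.
rewrite -mulr_sumr big_split /= sumr_const card_ord.
rewrite (eq_bigr (fun m => (i == m)%:R * (m == k)%:R)) => [|m _]; last exact: mulrC.
by rewrite sum_delta natrD; ring.
Qed.

Lemma alpha_normalized : alpha / 6 * ((d + 1) * (d + 2))%:R = 1.
Proof.
have d_neq0 : (d%:R : R[i]) != 0 by rewrite pnatr_eq0 -lt0n (leq_ltn_trans _ (ltn_ord p0)).
apply: (mulfI d_neq0); rewrite mulr1 -[in RHS](moment_nil P U) (moment_cons haarU).
under eq_bigr do rewrite moment1_alpha eqxx mulr1.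
by rewrite sumr_const card_ord -mulr_natl natrM; ring.
Qed.

Lemma alphaE : alpha / 6 = ((d + 1) * (d + 2))%:R^-1.
Proof.
have nz : ((d + 1) * (d + 2))%:R != 0 :> R[i] by rewrite pnatr_eq0 muln_eq0 !addn_eq0 andbF.
by apply: (mulIf nz); rewrite alpha_normalized (mulVf nz).
Qed.

End FixedBase.

Lemma moment3E (x1 x2 x3 z1 z2 z3 : 'I_d) : mom [:: x1; x2; x3] [:: z1; z2; z3] =
  ((d + 1) * (d + 2))%:R^-1 * nperm3 x1 x2 x3 z1 z2 z3.
Proof. by rewrite (moment3_alpha x1) alphaE. Qed.

Lemma moment2E (i j k l : 'I_d) : mom [:: i; j] [:: k; l] =
  (d + 1)%:R^-1 * ((i == k)%:R * (j == l)%:R + (i == l)%:R * (j == k)%:R).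
Proof.
rewrite (moment2_alpha i) alphaE natrM; field.
by rewrite !paddr_eq0 ?ler0n ?oner_eq0 ?pnatr_eq0 ?andbF.
Qed.

End Weingarten.

(** * The twirl of [O_+] *)

Lemma sum_trip (R : nmodType) (d : nat) (F : trip d -> R) :
  \sum_y F y = \sum_y1 \sum_y2 \sum_y3 F ((y1, y2), y3).
Proof.
rewrite [RHS](pair_bigA _ (fun y1 y2 => \sum_y3 F ((y1, y2), y3))) /=.
by rewrite [RHS](pair_bigA _ (fun y12 y3 => F ((y12.1, y12.2), y3))); apply: eq_bigr => -[[]].
Qed.

Section TensorSums.
Variables (R : realType) (d : nat).
Variables (B : 'M[R[i]]_d) (x1 x2 x3 z1 z2 z3 : 'I_d).
Hypothesis uB : unitary B.

Let tt (y : trip d) : R[i] := tens3 B ((x1, x2), x3) y * (tens3 B ((z1, z2), z3) y)^*.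

Lemma sum_tens3 : \sum_y tt y = (x1 == z1)%:R * (x2 == z2)%:R * (x3 == z3)%:R.
Proof.
rewrite sum_trip -(unitary_rowsE uB x1 z1) -(unitary_rowsE uB x2 z2) -(unitary_rowsE uB x3 z3).
rewrite big_distrlr big_distrl; apply: eq_bigr => y1 _; rewrite big_distrl.
apply: eq_bigr => y2 _; rewrite big_distrr; apply: eq_bigr => y3 _.
by rewrite /tt /tens3 !rmorphM /=; ring.
Qed.

Lemma sum_tens3_eq12 : \sum_y (y.1.1 == y.1.2)%:R * tt y
  = colmoment [:: x1; x2] [:: z1; z2] B * (x3 == z3)%:R.
Proof.
rewrite sum_trip /=; under eq_bigr do under eq_bigr do rewrite -mulr_sumr.
under eq_bigr do rewrite sum_delta.
rewrite /colmoment -(unitary_rowsE uB x3 z3) big_distrlr; apply: eq_bigr => y1 _.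
by apply: eq_bigr => y3 _; rewrite /tt /tens3 !big_cons !big_nil !rmorphM /=; ring.
Qed.

Lemma sum_tens3_eq23 : \sum_y (y.1.2 == y.2)%:R * tt y
  = (x1 == z1)%:R * colmoment [:: x2; x3] [:: z2; z3] B.
Proof.
rewrite sum_trip /=; under eq_bigr do under eq_bigr do rewrite sum_delta.
rewrite /colmoment -(unitary_rowsE uB x1 z1) big_distrlr; apply: eq_bigr => y1 _.
by apply: eq_bigr => y2 _; rewrite /tt /tens3 !big_cons !big_nil !rmorphM /=; ring.
Qed.

Lemma sum_tens3_eq13 : \sum_y (y.1.1 == y.2)%:R * tt y
  = colmoment [:: x1; x3] [:: z1; z3] B * (x2 == z2)%:R.
Proof.
rewrite sum_trip /=; under eq_bigr do under eq_bigr do rewrite sum_delta.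
rewrite /colmoment -(unitary_rowsE uB x2 z2) big_distrlr; apply: eq_bigr => y1 _.
by apply: eq_bigr => y2 _; rewrite /tt /tens3 !big_cons !big_nil !rmorphM /=; ring.
Qed.

Lemma sum_tens3_eq123 : \sum_y (y.1.1 == y.1.2)%:R * (y.1.2 == y.2)%:R * tt y
  = colmoment [:: x1; x2; x3] [:: z1; z2; z3] B.
Proof.
rewrite sum_trip /=; under eq_bigr do under eq_bigr do under eq_bigr do rewrite -mulrA.
under eq_bigr do under eq_bigr do rewrite -mulr_sumr sum_delta.
under eq_bigr do rewrite sum_delta.
by apply: eq_bigr => y _; rewrite /tt /tens3 !big_cons !big_nil !rmorphM /=; ring.
Qed.

End TensorSums.

Section TwirlOplus.
Variables (R : realType) (d : nat).
Local Notation c3 := (((d + 1) * (d + 2))%:R : R[i]).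
Local Notation c2 := ((d + 1)%:R : R[i]).

Lemma Oplus_tens3 (B : 'M[R[i]]_d) (x1 x2 x3 z1 z2 z3 : 'I_d) : unitary B ->
  \sum_y \sum_v tens3 B ((x1, x2), x3) y * @Oplus R d y v * conjc (tens3 B ((z1, z2), z3) v)
  = c3 * colmoment [:: x1; x2; x3] [:: z1; z2; z3] B
    - c2 * (colmoment [:: x1; x2] [:: z1; z2] B * (x3 == z3)%:R
            + (x1 == z1)%:R * colmoment [:: x2; x3] [:: z2; z3] B
            + colmoment [:: x1; x3] [:: z1; z3] B * (x2 == z2)%:R)
    + 2 * ((x1 == z1)%:R * (x2 == z2)%:R * (x3 == z3)%:R).
Proof.
move=> uB; set tt := fun y => tens3 B ((x1, x2), x3) y * (tens3 B ((z1, z2), z3) y)^*.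
have OplusE (y : trip d) : @Oplus R d y y = c3 * ((y.1.1 == y.1.2)%:R * (y.1.2 == y.2)%:R)
    - c2 * ((y.1.1 == y.1.2)%:R + (y.1.2 == y.2)%:R + (y.1.1 == y.2)%:R) + 2.
  case: y => [[y1 y2] y3]; rewrite /Oplus eqxx /=.
  by case: (y1 == y2); case: (y2 == y3); rewrite ?mulr1 ?mulr0.
transitivity (\sum_y (c3 * ((y.1.1 == y.1.2)%:R * (y.1.2 == y.2)%:R * tt y)
    - c2 * ((y.1.1 == y.1.2)%:R * tt y + (y.1.2 == y.2)%:R * tt y + (y.1.1 == y.2)%:R * tt y)
    + 2 * tt y)).
  apply: eq_bigr => y _; rewrite (bigD1 y) //= big1 => [|v vy]; last first.
    by rewrite /Oplus eq_sym (negbTE vy) mulr0 mul0r.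
  by rewrite addr0 OplusE /tt; ring.
rewrite big_split sumrB -!mulr_sumr !big_split /=.
by rewrite sum_tens3_eq123 // sum_tens3_eq12 // sum_tens3_eq23 // sum_tens3_eq13 // sum_tens3.
Qed.

Variables (dO : measure_display) (O : measurableType dO) (P : probability O R).
Variable U : O -> 'M[R[i]]_d.
Hypothesis haarU : haar_unitary P U.
Local Notation mom := (moment P U).

Lemma twirl3_OplusE (x1 x2 x3 z1 z2 z3 : 'I_d) :
  twirl3 P U (@Oplus R d) ((x1, x2), x3) ((z1, z2), z3)
  = c3 * mom [:: x1; x2; x3] [:: z1; z2; z3]
    - c2 * (mom [:: x1; x2] [:: z1; z2] * (x3 == z3)%:R
            + (x1 == z1)%:R * mom [:: x2; x3] [:: z2; z3]
            + mom [:: x1; x3] [:: z1; z3] * (x2 == z2)%:R)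
    + 2 * ((x1 == z1)%:R * (x2 == z2)%:R * (x3 == z3)%:R).
Proof.
have uU w : unitary (U w) by case: haarU.
set e1 := (x1 == z1)%:R; set e2 := (x2 == z2)%:R; set e3 := (x3 == z3)%:R.
transitivity (cexpect P (fun w => c3 * colmoment [:: x1; x2; x3] [:: z1; z2; z3] (U w)
    + (- c2 * e3) * colmoment [:: x1; x2] [:: z1; z2] (U w)
    + (- c2 * e1) * colmoment [:: x2; x3] [:: z2; z3] (U w)
    + (- c2 * e2) * colmoment [:: x1; x3] [:: z1; z3] (U w)
    + 2 * (e1 * e2 * e3))).
  by apply: eq_cexpect => w; rewrite Oplus_tens3 //; ring.
have mG s t := bmeasurable_colmomentU haarU s t.
rewrite !cexpectD ?cexpectZl ?cexpect_cst /moment; first ring.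
all: by repeat first [apply: bmeasurableD | apply: bmeasurableM | exact: bmeasurable_cst].
Qed.

Lemma twirl3_Oplus : twirl3 P U (@Oplus R d) = @Mplus R d.
Proof.
apply/funext => -[[x1 x2] x3]; apply/funext => -[[z1 z2] z3].
rewrite twirl3_OplusE (moment3E haarU) !(moment2E haarU) /Mplus /W123 /W132 /nperm3 /=.
rewrite !xpair_eqE -!mulnb !natrM.
by field; rewrite !paddr_eq0 ?ler0n ?oner_eq0 ?pnatr_eq0 ?andbF.
Qed.

End TwirlOplus.

Section TwirlLinear.
Variables (R : realType) (d : nat).
Variables (dO : measure_display) (O : measurableType dO) (P : probability O R).
Variable U : O -> 'M[R[i]]_d.
Hypothesis haarU : haar_unitary P U.

Lemma twirl3_matunit_expand (X : op R (trip d)) (x z : trip d) :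
  \sum_a \sum_a' X a a' * twirl3 P U (matunit R a a') x z = twirl3 P U X x z.
Proof.
pose T w a a' := tens3 (U w) x a * conjc (tens3 (U w) z a').
have twirl_unit a a' : twirl3 P U (matunit R a a') x z = cexpect P (fun w => T w a a').
  apply: eq_cexpect => w; rewrite -(sum_delta a' (T w a)).
  rewrite -(sum_delta a (fun y => \sum_v (a' == v)%:R * T w y v)).
  apply: eq_bigr => y _; rewrite mulr_sumr.
  by apply: eq_bigr => v _; rewrite /matunit -mulnb natrM (eq_sym y) (eq_sym v) /T; ring.
have mT a a' : bmeasurable (fun w => T w a a').
  rewrite /T /tens3; apply: bmeasurableM; last apply: bmeasurableJ;
  by repeat apply: bmeasurableM; exact: (haar_bmeasurable_coord haarU _ _).
have mXT a a' : bmeasurable (fun w => X a a' * T w a a').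
  by apply: bmeasurableM; [apply: bmeasurable_cst | apply: mT].
under eq_bigr => a _ do under eq_bigr => a' _ do rewrite twirl_unit -(cexpectZl P _ (mT a a')).
under eq_bigr => a _ do rewrite -(cexpect_sum P _ (mXT a)).
rewrite -(cexpect_sum P _ (fun a => bmeasurable_sum _ (mXT a))).
by apply: eq_cexpect => w; apply: eq_bigr => a _; apply: eq_bigr => a' _; rewrite /T; ring.
Qed.

End TwirlLinear.

Lemma tens_super_tensop (R : realType) (T1 T2 : finType)
    (Phi1 : op R T1 -> op R T1) (Phi2 : op R T2 -> op R T2) (X : op R T1) (Y : op R T2) :
  (forall x y, \sum_a \sum_a' X a a' * Phi1 (matunit R a a') x y = Phi1 X x y) ->
  (forall x y, \sum_b \sum_b' Y b b' * Phi2 (matunit R b b') x y = Phi2 Y x y) ->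
  tens_super Phi1 Phi2 (tensop X Y) = tensop (Phi1 X) (Phi2 Y).
Proof.
move=> Phi1E Phi2E; apply/funext => -[x1 x2]; apply/funext => -[y1 y2].
rewrite /tens_super /tensop /= -Phi1E -Phi2E big_distrl; apply: eq_bigr => a _.
rewrite big_distrl; apply: eq_bigr => a' _; rewrite big_distrr; apply: eq_bigr => b _.
by rewrite big_distrr; apply: eq_bigr => b' _ /=; ring.
Qed.

Theorem proposition1 (R : realType) (dA dB : nat)
  (dOA : measure_display) (OA : measurableType dOA) (PA : probability OA R)
  (UA : OA -> 'M[R[i]]_dA)
  (dOB : measure_display) (OB : measurableType dOB) (PB : probability OB R)
  (UB : OB -> 'M[R[i]]_dB) :
  haar_unitary PA UA -> haar_unitary PB UB ->
  [/\ twirl3 PA UA (@Oplus R dA) = @Mplus R dA,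
      twirl3 PB UB (@Oplus R dB) = @Mplus R dB
    & tens_super (twirl3 PA UA) (twirl3 PB UB)
        (tensop (@Oplus R dA) (@Oplus R dB))
      = tensop (@Mplus R dA) (@Mplus R dB)].
Proof.
move=> haarA haarB; have OplusA := twirl3_Oplus haarA; have OplusB := twirl3_Oplus haarB.
split=> //; rewrite -OplusA -OplusB.
by apply: tens_super_tensop => x y; apply: twirl3_matunit_expand.
Qed.
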